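(* Let $n\ge 2k+1$ and let $S$ be a vertex cut of $K(n,k)$ achieving the toughness of $K(n,k)$, i.e. $\frac{|S|}{c(K(n,k)\setminus S)}=t(K(n,k))$. Then every connected component of $K(n,k)\setminus S$ is either a single vertex, a copy of $K_2$, or is biconnected (2-connected).
   Context: The Kneser graph $K(n,k)$ has as vertices the $k$-element subsets of $[n]=\{1,\dots,n\}$, two vertices being adjacent iff they are disjoint. A vertex cut is a set $S$ of vertices whose removal disconnects the graph; $c(G\setminus S)$ is the number of connected components after deleting $S$; the toughness is $t(G)=\min_S |S|/c(G\setminus S)$ over vertex cuts $S$. *)

From mathcomp Require Import all_boot all_order all_algebra.
Set Implicit Arguments. Unset Strict Implicit. Unset Printing Implicit Defensive.
Import Order.TTheory GRing.Theory Num.Theory.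

Section Graphs.
Variables (T : finType) (e : rel T).

Definition induced_rel (C : {set T}) : rel T :=
  fun x y => [&& x \in C, y \in C & e x y].

Definition connected_in (C : {set T}) : Prop :=
  forall x y, x \in C -> y \in C -> connect (induced_rel C) x y.

Definition components (S : {set T}) : {set {set T}} :=
  [set [set y in ~: S | connect (induced_rel (~: S)) x y] | x in ~: S].

Definition ncomp (S : {set T}) : nat := #|components S|.

Definition vertex_cut (S : {set T}) : bool := 1 < ncomp S.

Definition attains_toughness (S : {set T}) : Prop :=
  vertex_cut S /\
  forall S' : {set T}, vertex_cut S' ->
    ((#|S|%:R / (ncomp S)%:R : rat) <= #|S'|%:R / (ncomp S')%:R)%R.

Definition biconnected (C : {set T}) : Prop :=
  2 < #|C| /\ forall v, v \in C -> connected_in (C :\ v).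

End Graphs.

Definition kneser_vertex (n k : nat) := {A : {set 'I_n} | #|A| == k}.

Definition kneser_adj (n k : nat) : rel (kneser_vertex n k) :=
  fun A B => [disjoint val A & val B].

From mathcomp Require Import all_boot all_order all_algebra.
From mathcomp Require Import zify.
Set Implicit Arguments. Unset Strict Implicit. Unset Printing Implicit Defensive.
Import GRing.Theory Num.Theory.

(* Let d be the degree of K(n,k) (for k <= 1 the graph is complete and has no
   vertex cut).  Kneser graphs are connected and arc-transitive, so by Mader's
   atom argument every fragment X (X nonempty, with nonempty exterior) has at
   least d boundary vertices: an atom, a smallest fragment of minimum boundary,
   contains every minimum fragment it meets, and arc-transitivity then forces it
   to be a single vertex.  Double counting the edges between S and the
   components of G \ S gives d c(G\S) <= d |S|.  If a component C of a toughest
   cut S with |C| >= 3 had a cut vertex v, then S + v would leave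
   c' >= c - 1 + f components, f >= 2 being the number of pieces of C - v;
   toughness then forces |S| = c, and the same double count for S + v, where v
   meets at most f components, yields d (f - 1) <= f, contradicting d >= 3. *)

(** * Fragments, atoms and vertex connectivity *)

Section Fragments.
Variables (T : finType) (e : rel T).
Hypothesis e_sym : symmetric e.
Implicit Types X Y Z : {set T}.

Definition nbr x := [set y | e x y].
Definition boundary (X : {set T}) := [set y | (y \notin X) && [exists x in X, e x y]].
Definition exterior (X : {set T}) := ~: (X :|: boundary X).
Definition fragment (X : {set T}) := (X != set0) && (exterior X != set0).

Lemma boundaryP X z :
  reflect (z \notin X /\ exists2 x, x \in X & e x z) (z \in boundary X).
Proof.
rewrite inE; apply: (iffP andP) => -[zX].
  by move=> /exists_inP[x]; split=> //; exists x.
by case=> x xX exz; split=> //; apply/exists_inP; exists x.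
Qed.

Lemma exteriorP X z :
  reflect (z \notin X /\ forall x, x \in X -> ~~ e x z) (z \in exterior X).
Proof.
rewrite in_setC in_setU negb_or; apply: (iffP andP) => -[zX zB]; split=> //.
  by move=> x xX; apply: contra zB => exz; apply/boundaryP; split=> //; exists x.
by apply/boundaryP => -[_ [x /zB /negP]].
Qed.

Lemma card_partition Z X :
  #|Z| = #|Z :&: X| + #|Z :&: boundary X| + #|Z :&: exterior X|.
Proof.
rewrite -(cardsID (X :|: boundary X) Z) setIUr cardsU setDE.
have /eqP -> : Z :&: X :&: (Z :&: boundary X) == set0.
  by apply/set0Pn => -[z /setIP[/setIP[_ zX] /setIP[_ /boundaryP[]]]]; rewrite zX.
by rewrite cards0 subn0.
Qed.

Lemma exteriorS X Y : Y \subset X -> exterior X \subset exterior Y.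
Proof.
move=> /subsetP sYX; apply/subsetP => z /exteriorP[zX nXz]; apply/exteriorP.
by split=> [|x /sYX]; [apply: contra zX => /sYX | apply: nXz].
Qed.

Lemma boundary_exterior X : boundary (exterior X) \subset boundary X.
Proof.
apply/subsetP => z /boundaryP[zE [x /exteriorP[xX nXx] exz]].
move: zE; rewrite in_setC in_setU negbK => /orP[zX|//].
by move: (nXx z zX); rewrite e_sym exz.
Qed.

Lemma sub_exterior_exterior X : X \subset exterior (exterior X).
Proof.
apply/subsetP => x xX; apply/exteriorP; split.
  by rewrite in_setC in_setU xX.
by move=> z /exteriorP[_ nXz]; rewrite e_sym nXz.
Qed.

Lemma fragmentS X Y : fragment X -> Y != set0 -> Y \subset X -> fragment Y.
Proof.
case/andP=> _ /set0Pn[z zE] Y0 sYX; rewrite /fragment Y0.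
by apply/set0Pn; exists z; apply: subsetP (exteriorS sYX) z zE.
Qed.

Lemma fragment_sub_exterior X Y :
  X != set0 -> Y != set0 -> Y \subset exterior X -> fragment Y.
Proof.
move=> /set0Pn[x xX] Y0 sYE; rewrite /fragment Y0; apply/set0Pn; exists x.
exact: subsetP (exteriorS sYE) x (subsetP (sub_exterior_exterior X) x xX).
Qed.

Lemma fragment_exterior X : fragment X -> fragment (exterior X).
Proof. by case/andP=> X0 E0; exact: fragment_sub_exterior X0 E0 (subxx _). Qed.

Lemma card_boundaryI X Y :
  #|boundary (X :&: Y)| <=
    #|boundary X :&: Y| + #|boundary X :&: boundary Y| + #|X :&: boundary Y|.
Proof.
have sub : boundary (X :&: Y) \subset
    (boundary X :&: Y) :|: (boundary X :&: boundary Y) :|: (X :&: boundary Y).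
  apply/subsetP => z /boundaryP[zXY [x /setIP[xX xY] exz]].
  have bX : z \notin X -> z \in boundary X by move=> zX; apply/boundaryP; split=> //; exists x.
  have bY : z \notin Y -> z \in boundary Y by move=> zY; apply/boundaryP; split=> //; exists x.
  move: zXY; rewrite !in_setU !in_setI.
  case: (boolP (z \in X)) => zX; case: (boolP (z \in Y)) => zY //= _.
  - by rewrite (bY zY) orbT.
  - by rewrite (bX zX).
  - by rewrite (bX zX) (bY zY) orbT.
apply: leq_trans (subset_leq_card sub) _.
rewrite cardsU; apply: leq_trans (leq_subr _ _) _.
by rewrite cardsU leq_add2r leq_subr.
Qed.

Lemma connected_boundary_neq0 :
  (forall x y, connect e x y) -> forall X, fragment X -> boundary X != set0.
Proof.
move=> e_conn X /andP[/set0Pn[x xX] /set0Pn[z /exteriorP[zX _]]].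
apply: contraNneq zX => bX0; have e_csym := sym_connect_sym e_sym.
have X_closed : closed e X.
  apply: (intro_closed e_csym) => a b eab aX; apply: contraT => bX.
  by rewrite -(in_set0 b) -bX0; apply/boundaryP; split=> //; exists a.
by rewrite -(closed_connect X_closed (e_conn x z)).
Qed.

Section Automorphism.
Variable phi : T -> T.
Hypothesis phi_inj : injective phi.
Hypothesis phi_mono : {mono phi : a b / e a b}.

Lemma phi_onto w : exists v, w = phi v.
Proof. by case: (injF_bij phi_inj) => g _ gK; exists (g w); rewrite gK. Qed.

Lemma boundary_imset X : boundary (phi @: X) = phi @: boundary X.
Proof.
apply/setP => w; have [v ->] := phi_onto w; rewrite (mem_imset _ _ phi_inj).
apply/boundaryP/boundaryP; rewrite (mem_imset _ _ phi_inj) => -[vX [x xX exv]].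
  have [u xu] := phi_onto x; move: xX exv; rewrite xu (mem_imset _ _ phi_inj) phi_mono.
  by split=> //; exists u.
by split=> //; exists (phi x); rewrite ?(mem_imset _ _ phi_inj) ?phi_mono.
Qed.

Lemma fragment_imset X : fragment X -> fragment (phi @: X).
Proof.
case/andP=> /set0Pn[x xX] /set0Pn[z zE]; apply/andP; split; apply/set0Pn.
  by exists (phi x); rewrite (mem_imset _ _ phi_inj).
exists (phi z); move: zE; rewrite !in_setC !in_setU boundary_imset.
by rewrite !(mem_imset _ _ phi_inj).
Qed.

End Automorphism.

Definition arc_transitive := forall x y u z, e x y -> e u z ->
  exists phi : T -> T, [/\ injective phi, {mono phi : a b / e a b}, phi x = u & phi y = z].

Section ArcTransitive.
Hypothesis e_irr : irreflexive e.
Hypothesis e_arc : arc_transitive.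
Hypothesis boundary_neq0 : forall X, fragment X -> boundary X != set0.

Lemma card_nbr_le x y u : e x y -> #|nbr u| <= #|nbr x|.
Proof.
move=> exy; have [->|[z]] := set_0Vmem (nbr u); first by rewrite cards0.
rewrite inE => euz; have [phi [phi_inj phi_mono phi_u _]] := e_arc euz exy.
rewrite -(card_imset _ phi_inj); apply/subset_leq_card/subsetP => v /imsetP[w].
by rewrite !inE => euw ->; rewrite -phi_u phi_mono.
Qed.

Section Atom.
Variables (kappa : nat) (A : {set T}).
Hypothesis kappa_min : forall X, fragment X -> kappa <= #|boundary X|.
Hypothesis A_fragment : fragment A.
Hypothesis A_boundary : #|boundary A| <= kappa.
Hypothesis A_min : forall X, fragment X -> #|boundary X| <= kappa -> #|A| <= #|X|.

Lemma atom_subset F :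
  fragment F -> #|boundary F| <= kappa -> A :&: F != set0 -> A \subset F.
Proof.
move=> fF bF AF0.
suff bAF : #|boundary (A :&: F)| <= kappa.
  have le := A_min (fragmentS A_fragment AF0 (subsetIl _ _)) bAF.
  by apply/setIidPl/eqP; rewrite eqEcard subsetIl.
have A0 : A != set0 by case/andP: A_fragment.
have cross := card_boundaryI A F.
have pA := card_partition (boundary A) F.
have pF := card_partition (boundary F) A.
rewrite !(setIC (boundary F)) in pF.
have pA1 := card_partition A F.
have AF1 : 0 < #|A :&: F| by rewrite card_gt0.
case: (eqVneq (exterior A :&: exterior F) set0) => [A'F'0 | A'F'].
  (* [A] is no larger than the fragment [exterior F], which now lies in
     [A :|: boundary A]; so [#|A :&: boundary F| < #|boundary A :&: exterior F|]. *)
  have bF' := leq_trans (subset_leq_card (boundary_exterior F)) bF.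
  have AF' := A_min (fragment_exterior fF) bF'.
  have pF' := card_partition (exterior F) A.
  rewrite !(setIC (exterior F)) A'F'0 cards0 in pF'.
  lia.
(* Submodularity: the boundaries of [A :&: F] and [exterior A :&: exterior F]
   together fit into [boundary A] and [boundary F]. *)
have kA'F' := kappa_min (fragment_sub_exterior A0 A'F' (subsetIl _ _)).
have cross' := card_boundaryI (exterior A) (exterior F).
have m1 : #|boundary (exterior A) :&: exterior F| <= #|boundary A :&: exterior F|.
  by apply/subset_leq_card/setSI/boundary_exterior.
have m2 : #|boundary (exterior A) :&: boundary (exterior F)| <=
          #|boundary A :&: boundary F|.
  by apply/subset_leq_card/setISS; apply/boundary_exterior.
have m3 : #|exterior A :&: boundary (exterior F)| <= #|exterior A :&: boundary F|.
  by apply/subset_leq_card/setIS/boundary_exterior.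
lia.
Qed.

Lemma atom_set1 x : x \in A -> A = [set x].
Proof.
move=> xA.
have no_edge y : y \in A -> ~~ e x y.
  move=> yA; apply/negP => exy.
  have /set0Pn[z /boundaryP[zA [u uA euz]]] := boundary_neq0 A_fragment.
  have [phi [phi_inj phi_mono phi_x phi_y]] := e_arc exy euz.
  have AphiA : A \subset phi @: A.
    apply: atom_subset; first exact: fragment_imset.
      by rewrite boundary_imset // (card_imset _ phi_inj).
    by apply/set0Pn; exists u; rewrite inE uA -phi_x (mem_imset _ _ phi_inj).
  have /eqP AE : A == phi @: A by rewrite eqEcard AphiA card_imset //=.
  by move: zA; rewrite AE -phi_y (mem_imset _ _ phi_inj) yA.
have x_fragment : fragment [set x].
  by apply: fragmentS A_fragment _ _; rewrite ?set11 ?sub1set // -card_gt0 cards1.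
have : #|A| <= #|[set x]|.
  apply: A_min x_fragment (leq_trans (subset_leq_card _) A_boundary).
  apply/subsetP => z /boundaryP[_ [_ /set1P-> exz]]; apply/boundaryP; split.
    exact: contraTN (no_edge z) exz.
  by exists x.
by rewrite cards1 => A1; apply/eqP; rewrite eq_sym eqEcard sub1set xA cards1.
Qed.

End Atom.

Lemma boundary_set1 x : boundary [set x] = nbr x.
Proof.
apply/setP => z; rewrite [z \in nbr x]inE; apply/boundaryP/idP => [[_ [_ /set1P-> //]]|exz].
split; last by exists x; rewrite ?set11.
by rewrite inE; apply: contraTneq exz => ->; rewrite e_irr.
Qed.

Theorem card_nbr_le_boundary X u : fragment X -> #|nbr u| <= #|boundary X|.
Proof.
move=> fX; have [X1 fX1 minX1] := arg_minnP (fun X => #|boundary X|) fX.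
set kappa := #|boundary X1|.
have kappa_X1 : fragment X1 && (#|boundary X1| <= kappa) by rewrite fX1 leqnn.
have [A /andP[fA bA] minA] :=
  @arg_minnP _ X1 (fun X => fragment X && (#|boundary X| <= kappa)) (fun X => #|X|) kappa_X1.
have /andP[/set0Pn[x xA] _] := fA.
have Ax : A = [set x].
  apply: (atom_set1 (kappa := kappa)) fA bA _ x xA => [Y fY|Y fY bY].
    exact: minX1.
  by apply: minA; rewrite fY bY.
have /set0Pn[b] := boundary_neq0 fA; rewrite Ax boundary_set1 inE => exb.
apply: leq_trans (card_nbr_le u exb) _.
by rewrite -boundary_set1 -Ax; apply: leq_trans bA (minX1 _ fX).
Qed.

End ArcTransitive.

End Fragments.

(** * Components and toughest cuts *)

Lemma nat_ratio_le (a b a' b' : nat) : 0 < b -> 0 < b' ->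
  ((a%:R / b%:R : rat) <= a'%:R / b'%:R)%R -> a * b' <= a' * b.
Proof.
move=> b0 b'0; rewrite ler_pdivrMr ?ltr0n // mulrAC ler_pdivlMr ?ltr0n //.
by rewrite -!natrM ler_nat.
Qed.

Lemma sum_mem_card (I : finType) (A B : {set I}) : \sum_(i in A) (i \in B) = #|A :&: B|.
Proof.
rewrite -sum1_card big_mkcond [RHS]big_mkcond; apply: eq_bigr => i _.
by rewrite inE; case: (i \in A); case: (i \in B).
Qed.

Section Components.
Variables (T : finType) (e : rel T).
Hypothesis e_sym : symmetric e.
Implicit Types (A B S C D : {set T}).

Lemma connect_induced_sub A B x y :
  A \subset B -> connect (induced_rel e A) x y -> connect (induced_rel e B) x y.
Proof.
move=> /subsetP sAB; apply: connect_sub => a b /and3P[aA bA eab].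
by apply: connect1; rewrite /induced_rel !sAB.
Qed.

Lemma connect_induced_closed A B x y :
  (forall a b, a \in B -> b \in A -> e a b -> b \in B) -> x \in B ->
  connect (induced_rel e A) x y -> connect (induced_rel e B) x y.
Proof.
move=> closedB xB /connectP[p + ->]; elim: p x xB => [|z p IHp] x xB /=.
  by rewrite connect0.
case/andP=> /and3P[_ zA exz] pz; have zB := closedB _ _ xB zA exz.
by apply: connect_trans (IHp z zB pz); apply: connect1; rewrite /induced_rel xB zB.
Qed.

Definition component S x := [set y in ~: S | connect (induced_rel e (~: S)) x y].

Lemma induced_connect_sym A : connect_sym (induced_rel e A).
Proof.
by apply: sym_connect_sym => x y; rewrite /induced_rel e_sym andbCA.
Qed.

Lemma componentsP S C :
  reflect (exists2 x, x \notin S & C = component S x) (C \in components e S).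
Proof.
apply: (iffP imsetP) => -[x]; rewrite ?in_setC => xS ->.
  by exists x.
by exists x; rewrite ?in_setC.
Qed.

Lemma mem_component S x : x \notin S -> x \in component S x.
Proof. by move=> xS; rewrite inE in_setC xS connect0. Qed.

Lemma component_id S x y : y \in component S x -> component S y = component S x.
Proof.
rewrite inE => /andP[_ cxy]; apply/setP => z; rewrite !inE.
case: (z \notin S) => //=; apply/idP/idP; first exact: connect_trans.
by apply: connect_trans; rewrite induced_connect_sym.
Qed.

Lemma componentS S S' x : S \subset S' -> component S' x \subset component S x.
Proof.
move=> sSS'; have sC : ~: S' \subset ~: S by rewrite setCS.
apply/subsetP => y; rewrite !inE => /andP[yS' cxy].
by rewrite (connect_induced_sub sC cxy) andbT; apply: contra yS'; apply: subsetP.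
Qed.

Section Component.
Variables (S C : {set T}).
Hypothesis C_comp : C \in components e S.

Lemma components_notin z : z \in C -> z \notin S.
Proof. by case/componentsP: C_comp => x _ ->; rewrite inE in_setC => /andP[]. Qed.

Lemma components_eq z : z \in C -> C = component S z.
Proof. by case/componentsP: C_comp => x _ -> /component_id ->. Qed.

Lemma components_neq0 : C != set0.
Proof.
by case/componentsP: C_comp => x xS ->; apply/set0Pn; exists x; apply: mem_component.
Qed.

Lemma components_closed a b : a \in C -> b \notin S -> e a b -> b \in C.
Proof.
move=> aC bS eab; move/components_eq: (aC) => ->; rewrite inE in_setC bS.
by apply: connect1; rewrite /induced_rel !in_setC bS components_notin.
Qed.

Lemma components_connect x y :
  x \in C -> connect (induced_rel e (~: S)) x y -> y \notin S ->
  connect (induced_rel e C) x y.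
Proof.
move=> xC cxy yS; apply: connect_induced_closed cxy => // a b aC.
by rewrite in_setC; apply: components_closed.
Qed.

Lemma boundary_components_sub : boundary e C \subset S.
Proof.
apply/subsetP => z /boundaryP[zC [a aC eaz]].
by apply: contraNT zC => zS; apply: components_closed aC zS eaz.
Qed.

End Component.

Lemma components_disjoint S C D z :
  C \in components e S -> D \in components e S -> z \in C -> z \in D -> C = D.
Proof.
by move=> C_comp D_comp zC zD; rewrite (components_eq C_comp zC) (components_eq D_comp zD).
Qed.

Lemma components_fragment S C :
  vertex_cut e S -> C \in components e S -> fragment e C.
Proof.
move=> /card_gt1P[D1 [D2 [D1_comp D2_comp D12]]] C_comp.
have [D D_comp DC] : exists2 D, D \in components e S & D != C.
  by case: (eqVneq D1 C) => [D1C|]; [exists D2; rewrite // -D1C eq_sym | exists D1].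
rewrite /fragment (components_neq0 C_comp); have /set0Pn[z zD] := components_neq0 D_comp.
apply/set0Pn; exists z; rewrite !in_setC !in_setU negb_or; apply/andP; split.
  by apply: contraNN DC => zC; rewrite (components_disjoint D_comp C_comp zD zC).
by apply: contraNN (components_notin D_comp zD); apply/subsetP/boundary_components_sub.
Qed.

Definition adj_components S u := [set C in components e S | u \in boundary e C].

Lemma sum_card_boundary_components S :
  \sum_(C in components e S) #|boundary e C| = \sum_(u in S) #|adj_components S u|.
Proof.
rewrite (eq_bigr (fun C => \sum_(u in S) (u \in boundary e C))); last first.
  by move=> C C_comp; rewrite sum_mem_card (setIidPr (boundary_components_sub C_comp)).
rewrite [RHS](eq_bigr (fun u => \sum_(C in components e S) (u \in boundary e C))).
  by rewrite exchange_big.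
move=> u _; rewrite /adj_components setIdE -sum_mem_card.
by apply: eq_bigr => C _; rewrite inE.
Qed.

Lemma card_adj_components_le S u : #|adj_components S u| <= #|nbr e u|.
Proof.
apply: leq_trans (leq_imset_card (component S) _); apply/subset_leq_card/subsetP.
move=> C; rewrite /adj_components inE => /andP[C_comp /boundaryP[_ [w wC ewu]]].
by apply/imsetP; exists w; [rewrite inE e_sym | apply: components_eq].
Qed.

Section Toughness.
Variable d : nat.
Hypothesis nbr_le : forall u, #|nbr e u| <= d.
Hypothesis boundary_ge : forall X, fragment e X -> d <= #|boundary e X|.

Lemma sum_adj_components_le S' S : \sum_(u in S) #|adj_components S' u| <= #|S| * d.
Proof.
rewrite -sum_nat_const; apply: leq_sum => u _.
exact: leq_trans (card_adj_components_le _ _) (nbr_le u).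
Qed.

Lemma ncomp_mul_le S :
  vertex_cut e S -> d * ncomp e S <= \sum_(u in S) #|adj_components S u|.
Proof.
move=> cutS; rewrite -sum_card_boundary_components /ncomp mulnC -sum_nat_const.
by apply: leq_sum => C C_comp; apply/boundary_ge/(components_fragment cutS).
Qed.

Definition subcomponents S C := [set D in components e S | D \subset C].

Section CutVertex.
Variables (S C : {set T}) (v : T).
Hypothesis C_comp : C \in components e S.
Hypothesis vC : v \in C.

Lemma setD1_component_notin z : z \in C :\ v -> z \notin v |: S.
Proof.
rewrite in_setD1 in_setU1 negb_or => /andP[zv zC].
by rewrite zv (components_notin C_comp zC).
Qed.

Lemma component_subcomponents z :
  z \in C :\ v -> component (v |: S) z \in subcomponents (v |: S) C.
Proof.
move=> zCv; rewrite inE; apply/andP; split.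
  by apply/componentsP; exists z; rewrite ?setD1_component_notin.
move: zCv; rewrite in_setD1 => /andP[_ zC].
by rewrite (components_eq C_comp zC); apply/componentS/subsetUr.
Qed.

Lemma components_setD1_sub : components e S :\ C \subset components e (v |: S).
Proof.
apply/subsetP => D; rewrite in_setD1 => /andP[DC D_comp].
have vD : v \notin D.
  by apply: contra DC => vD; rewrite (components_disjoint D_comp C_comp vD vC).
have notin_S' z : z \in D -> z \notin v |: S.
  move=> zD; rewrite in_setU1 negb_or (components_notin D_comp zD) andbT.
  by apply: contraNneq vD => <-.
have D_sub : D \subset ~: (v |: S) by apply/subsetP => z zD; rewrite in_setC notin_S'.
have /set0Pn[r rD] := components_neq0 D_comp.
apply/componentsP; exists r; first exact: notin_S'.
apply/eqP; rewrite eqEsubset; apply/andP; split; last first.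
  by rewrite (components_eq D_comp rD); apply/componentS/subsetUr.
apply/subsetP => z zD; rewrite inE in_setC notin_S' //=.
apply: connect_induced_sub D_sub (components_connect D_comp rD _ _).
  by move: zD; rewrite (components_eq D_comp rD) inE => /andP[].
exact: (components_notin D_comp zD).
Qed.

Lemma ncomp_setU1_ge :
  ncomp e S - 1 + #|subcomponents (v |: S) C| <= ncomp e (v |: S).
Proof.
have sub : (components e S :\ C) :|: subcomponents (v |: S) C \subset components e (v |: S).
  by rewrite subUset components_setD1_sub; apply/subsetP => D; rewrite inE => /andP[].
have disj : (components e S :\ C) :&: subcomponents (v |: S) C = set0.
  apply/setP => D; rewrite !inE; apply/negP => /and3P[/andP[DC D_comp] _ DsubC].
  have /set0Pn[z zD] := components_neq0 D_comp.
  by move: DC; rewrite (components_disjoint D_comp C_comp zD (subsetP DsubC z zD)) eqxx.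
have := subset_leq_card sub; rewrite cardsU disj cards0 subn0.
by rewrite /ncomp (cardsD1 C (components e S)) C_comp add1n subn1 succnK.
Qed.

Lemma card_subcomponents_gt1 x y : x \in C :\ v -> y \in C :\ v ->
  ~~ connect (induced_rel e (C :\ v)) x y -> 1 < #|subcomponents (v |: S) C|.
Proof.
move=> xCv yCv nxy; apply/card_gt1P.
exists (component (v |: S) x), (component (v |: S) y).
split; rewrite ?component_subcomponents //; apply: contraNneq nxy => Exy.
have : y \in component (v |: S) x by rewrite Exy mem_component ?setD1_component_notin.
rewrite inE => /andP[_]; apply: connect_induced_closed => // a b.
rewrite in_setD1 in_setC in_setU1 negb_or => /andP[av aC] /andP[bv bS] eab.
by rewrite in_setD1 bv (components_closed C_comp aC bS eab).
Qed.

Lemma card_adj_components_setU1 :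
  #|adj_components (v |: S) v| <= #|subcomponents (v |: S) C|.
Proof.
apply/subset_leq_card/subsetP => D; rewrite /adj_components inE.
case/andP=> D_comp /boundaryP[_ [w wD ewv]].
have := components_notin D_comp wD; rewrite in_setU1 negb_or => /andP[wv wS].
have wC : w \in C by apply: (components_closed C_comp vC wS); rewrite e_sym.
by rewrite (components_eq D_comp wD) component_subcomponents // in_setD1 wv.
Qed.

End CutVertex.

Hypothesis d_gt2 : 2 < d.

Theorem toughness_components S : attains_toughness e S ->
  forall C, C \in components e S -> #|C| = 1 \/ #|C| = 2 \/ biconnected e C.
Proof.
move=> [cutS tough] C C_comp.
have C_gt0 : 0 < #|C| by rewrite card_gt0 (components_neq0 C_comp).
case: (ltnP 2 #|C|) => [C_gt2|]; last by lia.
right; right; split=> // v vC x y xCv yCv; apply/negPn/negP => nxy.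
have vS : v \notin S := components_notin C_comp vC.
set c := ncomp e S; set c' := ncomp e (v |: S); set s := #|S|.
set f := #|subcomponents (v |: S) C|.
have f_gt1 : 1 < f := card_subcomponents_gt1 C_comp xCv yCv nxy.
have c'_ge : c - 1 + f <= c' := ncomp_setU1_ge C_comp vC.
have c_gt1 : 1 < c := cutS.
have cutS' : vertex_cut e (v |: S) by rewrite /vertex_cut -/c'; lia.
have ratio : s * c' <= s.+1 * c.
  have := nat_ratio_le _ _ (tough _ cutS'); rewrite cardsU1 vS add1n.
  by rewrite -/c -/c' -/s; apply; [exact: ltnW cutS | exact: ltnW cutS'].
have dc_le : d * c <= s * d.
  exact: leq_trans (ncomp_mul_le cutS) (sum_adj_components_le S S).
have dc'_le : d * c' <= f + s * d.
  apply: leq_trans (ncomp_mul_le cutS') _; rewrite big_setU1 //=.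
  exact: leq_add (card_adj_components_setU1 C_comp vC) (sum_adj_components_le _ S).
(* [c <= s] from the boundaries of [S], [s <= c] from toughness, and then
   [d (c - 1 + f) <= f + c d] forces [d <= 2] *)
nia.
Qed.

End Toughness.

End Components.

(** * Kneser graphs *)

Lemma exists_subset_card (T : finType) (D : {set T}) m :
  m <= #|D| -> exists2 A : {set T}, A \subset D & #|A| = m.
Proof.
case/card_geqP => s [s_uniq s_size sD]; exists [set x in s].
  by apply/subsetP => x; rewrite inE => /sD.
by rewrite cardsE (card_uniqP s_uniq) s_size.
Qed.

Section Relabel.
Variable T : finType.

Lemma perm_enum_cat3 (A B : {set T}) : [disjoint A & B] ->
  perm_eq (enum A ++ enum B ++ enum (~: (A :|: B))) (enum T).
Proof.
move=> dAB; apply: uniq_perm (enum_uniq T) _ => [|x].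
  rewrite !cat_uniq !enum_uniq /= andbT; apply/andP; split.
    apply/hasPn => z; rewrite mem_cat !mem_enum !inE => /orP[zB|].
      by apply: contraTN zB => zA; rewrite (disjointFr dAB zA).
    by rewrite negb_or => /andP[].
  by apply/hasPn => z; rewrite !mem_enum !inE negb_or => /andP[].
by rewrite mem_enum !mem_cat !mem_enum !inE; case: (x \in A); case: (x \in B).
Qed.

Lemma exists_relabel (A B C D : {set T}) :
  #|A| = #|C| -> #|B| = #|D| -> [disjoint A & B] -> [disjoint C & D] ->
  exists f : T -> T, [/\ injective f, f @: A = C & f @: B = D].
Proof.
move=> AC BD dAB dCD.
have pA := perm_enum_cat3 dAB; have pC := perm_enum_cat3 dCD.
set sA := enum A ++ _ in pA; set sC := enum C ++ _ in pC.
have mA x : x \in sA by rewrite (perm_mem pA) mem_enum.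
have uA : uniq sA by rewrite (perm_uniq pA) enum_uniq.
have uC : uniq sC by rewrite (perm_uniq pC) enum_uniq.
have size_s : size sC = size sA by rewrite (perm_size pA) (perm_size pC).
pose f x := nth x sC (index x sA).
have f_inj : injective f.
  move=> x y; rewrite /f (set_nth_default y) ?size_s ?index_mem //.
  move/eqP; rewrite nth_uniq ?size_s ?index_mem // => /eqP Exy.
  by rewrite -(nth_index x (mA x)) Exy nth_index.
have fA : f @: A \subset C.
  apply/subsetP => _ /imsetP[x xA ->].
  have lt : index x (enum A) < size (enum C) by rewrite -cardE -AC cardE index_mem mem_enum.
  by rewrite /f /sA index_cat mem_enum xA /sC nth_cat lt -mem_enum mem_nth.
have fB : f @: B \subset D.
  apply/subsetP => _ /imsetP[x xB ->].
  have xA : x \notin enum A by rewrite mem_enum (disjointFl dAB xB).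
  have lt : index x (enum B) < size (enum D) by rewrite -cardE -BD cardE index_mem mem_enum.
  rewrite /f /sA index_cat (negbTE xA) index_cat mem_enum xB /sC nth_cat.
  rewrite -!cardE AC ltnNge leq_addr /= addKn nth_cat -cardE -BD cardE.
  by rewrite index_mem mem_enum xB -mem_enum mem_nth // -cardE -BD cardE index_mem mem_enum.
by exists f; split=> //; apply/eqP; rewrite eqEcard ?fA ?fB card_imset // ?AC ?BD leqnn.
Qed.

End Relabel.

Section Kneser.
Variables n k : nat.
Local Notation V := (kneser_vertex n k).
Local Notation e := (@kneser_adj n k).

Lemma kneser_sym : symmetric e.
Proof. by move=> x y; rewrite /kneser_adj disjoint_sym. Qed.

Lemma card_kneser_vertex (x : V) : #|val x| = k.
Proof. exact: eqP (valP x). Qed.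

Lemma kneser_vertex_of (A : {set 'I_n}) : #|A| = k -> exists x : V, val x = A.
Proof. by move=> /eqP Ak; exists (Sub A Ak). Qed.

Lemma kneser_irr : 0 < k -> irreflexive e.
Proof.
move=> k_gt0 x; apply/negbTE; rewrite /kneser_adj -setI_eq0 setIid -card_gt0.
by rewrite card_kneser_vertex.
Qed.

Lemma card_imset_kneser (f : 'I_n -> 'I_n) (f_inj : injective f) (x : V) :
  #|f @: val x| == k.
Proof. by rewrite card_imset // (valP x). Qed.

Definition kneser_map f f_inj (x : V) : V := Sub (f @: val x) (@card_imset_kneser f f_inj x).

Lemma kneser_arc_transitive : arc_transitive e.
Proof.
move=> x y u z exy euz.
have := exists_relabel _ _ exy euz; rewrite !card_kneser_vertex.
case/(_ erefl erefl) => f [f_inj fx fy].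
exists (kneser_map f_inj); split; [| |by apply: val_inj..].
  by move=> a b /(congr1 val)/(imset_inj f_inj)/val_inj.
by move=> a b; rewrite /kneser_adj -!setI_eq0 -(imsetI (in2W f_inj)) imset_eq0.
Qed.

Lemma kneser_common_nbr_connect (x w : V) :
  2 * k + 1 <= n -> #|val x :|: val w| <= k.+1 -> connect e x w.
Proof.
move=> hn xw; have : k <= #|~: (val x :|: val w)|.
  by have := cardsC (val x :|: val w); rewrite card_ord; lia.
case/exists_subset_card => Z sZ /kneser_vertex_of[z zZ].
have ez (y : V) : val y \subset val x :|: val w -> e y z.
  move=> sy; rewrite /kneser_adj zZ disjoint_sym disjoint_subset.
  apply/(subset_trans sZ)/subsetP => i /setCP ni.
  by rewrite inE; apply/negP => /(subsetP sy).
apply: connect_trans (connect1 (ez x (subsetUl _ _))) (connect1 _).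
by rewrite kneser_sym ez ?subsetUr.
Qed.

Lemma kneser_connect : 2 * k + 1 <= n -> forall x y : V, connect e x y.
Proof.
move=> hn x y; suff conn m x' : #|val y :\: val x'| = m -> connect e x' y.
  exact: conn _ _ erefl.
elim: m x' => [|m IHm] x' ym.
  have sub : val y \subset val x' by rewrite -setD_eq0 -cards_eq0 ym.
  suff -> : x' = y by apply: connect0.
  by apply/val_inj/eqP; rewrite eq_sym eqEcard sub !card_kneser_vertex leqnn.
have /set0Pn[b] : val y :\: val x' != set0 by rewrite -card_gt0 ym.
rewrite inE => /andP[bx' yb].
have : 0 < #|val x' :\: val y|.
  by move: ym; rewrite !cardsD !card_kneser_vertex setIC; lia.
rewrite card_gt0 => /set0Pn[a]; rewrite inE => /andP[ay ax'].
have [w wE] : exists w : V, val w = b |: (val x' :\ a).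
  apply: kneser_vertex_of; rewrite cardsU1 in_setD1 (negbTE bx') andbF.
  by have := cardsD1 a (val x'); rewrite ax' card_kneser_vertex; lia.
apply: connect_trans (kneser_common_nbr_connect hn _) (IHm w _).
  have -> : val x' :|: val w = b |: val x'.
    by apply/setP => i; rewrite wE !inE; case: (i \in val x'); rewrite ?orbT ?andbF ?orbF.
  by rewrite cardsU1 bx' card_kneser_vertex.
have -> : val y :\: val w = (val y :\: val x') :\ b.
  apply/setP => i; rewrite wE !inE; case: (i =P b) => //= _.
  by case: (i =P a) => [->|]; rewrite ?(negbTE ay) ?andbF.
by have := cardsD1 b (val y :\: val x'); rewrite ym inE yb bx' => -[].
Qed.

Lemma kneser_nbr_gt : 2 * k + 1 <= n -> forall x : V, k < #|nbr e x|.
Proof.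
move=> hn x; have : k.+1 <= #|~: val x|.
  by have := cardsC (val x); rewrite card_kneser_vertex card_ord; lia.
case/exists_subset_card => D sD cD.
have sub : [set D :\ a | a in D] \subset [set val y | y in nbr e x].
  apply/subsetP => _ /imsetP[a aD ->].
  have [y yE] : exists y : V, val y = D :\ a.
    by apply: kneser_vertex_of; have := cardsD1 a D; rewrite aD cD; lia.
  apply/imsetP; exists y; rewrite // inE /kneser_adj yE disjoint_sym disjoint_subset.
  apply/subsetP => i /setD1P[_ /(subsetP sD)]; by rewrite !inE.
have := subset_leq_card sub; rewrite (card_imset _ val_inj) card_in_imset.
  by rewrite cD.
move=> a b aD bD /setP/(_ a); rewrite !inE eqxx aD /= andbT.
by case: (a =P b).
Qed.

Lemma kneser_adj_neq : k <= 1 -> forall x y : V, x != y -> e x y.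
Proof.
move=> k_le1 x y; rewrite /kneser_adj -setI_eq0.
apply: contraNT => /set0Pn[i /setIP[ix iy]].
have val_set1 (z : V) : i \in val z -> val z = [set i].
  by move=> iz; apply/eqP; rewrite eq_sym eqEcard sub1set iz cards1 card_kneser_vertex k_le1.
by apply/eqP/val_inj; rewrite (val_set1 x ix) (val_set1 y iy).
Qed.

Lemma kneser_no_vertex_cut : k <= 1 -> forall S : {set V}, ~~ vertex_cut e S.
Proof.
move=> k_le1 S; apply/negP => /card_gt1P[C1 [C2 [C1_comp C2_comp C12]]].
case/componentsP: (C1_comp) => x xS C1E; case/componentsP: (C2_comp) => y yS C2E.
have [xy_eq|xy] := eqVneq x y; first by move: C12; rewrite C1E C2E xy_eq eqxx.
have xC1 : x \in C1 by rewrite C1E mem_component.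
have yC1 := components_closed kneser_sym C1_comp xC1 yS (kneser_adj_neq k_le1 xy).
by move: C12; rewrite (components_eq kneser_sym C1_comp yC1) C2E eqxx.
Qed.

End Kneser.

Theorem lemma2p14 (n k : nat) (hn : 2 * k + 1 <= n)
  (S : {set kneser_vertex n k}) :
  attains_toughness (@kneser_adj n k) S ->
  forall C, C \in components (@kneser_adj n k) S ->
    #|C| = 1 \/ #|C| = 2 \/ biconnected (@kneser_adj n k) C.
Proof.
move=> tough C C_comp.
have [k_le1|k_gt1] := leqP k 1.
  by case: tough => cutS _; move: cutS; rewrite (negbTE (kneser_no_vertex_cut k_le1 S)).
have /set0Pn[x0 _] := components_neq0 C_comp.
have nbr_gt2 : 2 < #|nbr (@kneser_adj n k) x0| := leq_ltn_trans k_gt1 (kneser_nbr_gt hn x0).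
have /set0Pn[y0] : nbr (@kneser_adj n k) x0 != set0 by rewrite -card_gt0 (ltn_trans _ nbr_gt2).
rewrite inE => x0y0.
have e_sym := @kneser_sym n k; have e_arc := @kneser_arc_transitive n k.
apply: (toughness_components e_sym _ _ nbr_gt2 tough C_comp) => [u|X fX].
  exact: card_nbr_le e_arc _ _ _ x0y0.
have e_irr := @kneser_irr n k (ltnW k_gt1).
have e_conn := connected_boundary_neq0 e_sym (kneser_connect hn).
exact: card_nbr_le_boundary e_sym e_irr e_arc e_conn _ _ fX.
Qed.
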